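(* Let $\mathbf P=(P,\leq,{}',0,1)$ be an atomic pseudo-orthomodular poset. Then every element of $\mathbf P$ is the join (in $\mathbf P$) of an orthogonal set of atoms lying under it, and $\mathbf P$ is atomistic.
   Context: For $M\subseteq P$, $U(M)$, $L(M)$ are the sets of upper and lower bounds; $U(a,b)=U(\{a,b\})$ etc. A poset with complementation is a bounded poset with antitone involution $'$ ($x\le y\Rightarrow y'\le x'$, $x''=x$) with $L(x,x')=\{0\}$, $U(x,x')=\{1\}$; it is pseudo-orthomodular if $L(U(L(x,y),y'),y)=L(x,y)$ for all $x,y$. A subset $S$ is orthogonal if $s\le t'$ for all distinct $s,t\in S$. An atom is a minimal element of $P\setminus\{0\}$; $\mathbf P$ is atomic if every $b>0$ lies above some atom, and atomistic if every element is the join of a set of atoms. *)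

(* bounded posets are mathcomp's [tbPOrderType d]
   (0 = \bot, 1 = \top); subsets of P are predicates [T -> Prop]. *)
From mathcomp Require Import all_boot all_order.
Set Implicit Arguments. Unset Strict Implicit. Unset Printing Implicit Defensive.
Import Order.Theory.
Local Open Scope order_scope.

Section PosetDefs.
Context {d : Order.disp_t} {T : tbPOrderType d}.

Definition UB (M : T -> Prop) : T -> Prop := fun u => forall m, M m -> m <= u.
Definition LB (M : T -> Prop) : T -> Prop := fun l => forall m, M m -> l <= m.

Definition pair2 (a b : T) : T -> Prop := fun z => z = a \/ z = b.
Definition addpt (M : T -> Prop) (a : T) : T -> Prop := fun z => M z \/ z = a.

Definition complementation (c : T -> T) : Prop :=
  (forall x y, x <= y -> c y <= c x) /\
  (forall x, c (c x) = x) /\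
  (forall x z, LB (pair2 x (c x)) z <-> z = \bot) /\
  (forall x z, UB (pair2 x (c x)) z <-> z = \top).

(* L(U(L(x,y), y'), y) = L(x,y) *)
Definition pseudo_orthomodular (c : T -> T) : Prop :=
  forall x y z,
    LB (addpt (UB (addpt (LB (pair2 x y)) (c y))) y) z <-> LB (pair2 x y) z.

Definition orthogonal (c : T -> T) (S : T -> Prop) : Prop :=
  forall s t, S s -> S t -> s <> t -> s <= c t.

Definition atom (a : T) : Prop :=
  a <> \bot /\ forall b, b <> \bot -> b <= a -> b = a.

Definition atomic : Prop :=
  forall b, b <> \bot -> exists a, atom a /\ a <= b.

Definition is_join (S : T -> Prop) (x : T) : Prop :=
  UB S x /\ forall u, UB S u -> x <= u.

Definition atomistic : Prop :=
  forall x, exists S : T -> Prop, (forall s, S s -> atom s) /\ is_join S x.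

End PosetDefs.

From mathcomp Require Import all_boot all_order.
From mathcomp Require Import boolp classical_sets.
Import Order.Theory.
Local Open Scope order_scope.

(* By Zorn's lemma take a maximal orthogonal set S of atoms below x; we show
   that x is its join.  Let u be an upper bound of S.  Every m above L(u,x)
   and above x' is 1: otherwise an atom a <= m' lies below x and is orthogonal
   to all of S, so S could be enlarged.  Hence U(L(u,x), x') = {1}, and
   pseudo-orthomodularity gives L(x) = L(1,x) = L(u,x), i.e. x <= u. *)

Section Complementation.
Context {d : Order.disp_t} {T : tbPOrderType d} (c : T -> T).
Hypothesis hc : complementation c.

Lemma compl_anti x y : x <= y -> c y <= c x.
Proof. by case: hc => anti _; exact: anti. Qed.

Lemma complK : involutive c.
Proof. by case: hc => _ [invc _]. Qed.

Lemma compl_le_swap x y : x <= c y -> y <= c x.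
Proof. by move=> /compl_anti; rewrite complK. Qed.

Lemma compl_bot : c \bot = \top.
Proof.
by case: hc => _ [_ [_ cU]]; apply/cU => z [->|->]; [exact: le0x | exact: lexx].
Qed.

Lemma compl_eq_bot x : c x = \bot -> x = \top.
Proof. by move=> cx0; rewrite -(complK x) cx0 compl_bot. Qed.

Lemma le_compl_self x : x <= c x -> x = \bot.
Proof.
by case: hc => _ [_ [cL _]] xcx; apply/cL => z [->|->]; [exact: lexx | exact: xcx].
Qed.

Lemma orthogonal_addpt S a :
  orthogonal c S -> (forall s, S s -> s <= c a) -> orthogonal c (addpt S a).
Proof.
move=> orthS Sca s t [Ss|->] [St|->] st.
- exact: orthS.
- exact: Sca.
- exact/compl_le_swap/Sca.
- by case: st.
Qed.

Definition orth_atoms_below (x : T) (A : T -> Prop) : Prop :=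
  (forall s, A s -> atom s /\ s <= x) /\ orthogonal c A.

Definition maximal_orth_atoms_below (x : T) (S : T -> Prop) : Prop :=
  orth_atoms_below x S /\ forall B, (S `<` B)%classic -> ~ orth_atoms_below x B.

Lemma exists_maximal_orth_atoms_below x : exists S, maximal_orth_atoms_below x S.
Proof.
apply: Zorn_bigcup => F FP Ftot; split.
  by move=> s [A FA As]; exact: (proj1 (FP A FA) s As).
move=> s t [A FA As] [B FB Bt] st.
case: (Ftot A B FA FB) => [AB|BA].
  exact: (proj2 (FP B FB) s t (AB s As) Bt st).
exact: (proj2 (FP A FA) s t As (BA t Bt) st).
Qed.

Lemma maximal_orth_atoms_ub_compl_top {x S m} :
  @atomic d T -> maximal_orth_atoms_below x S ->
  UB S m -> c x <= m -> m = \top.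
Proof.
move=> hat [[atomS orthS] maxS] Sm cxm.
apply: compl_eq_bot; apply: contrapT => cm0.
have [a [atom_a acm]] := hat _ cm0.
have Sca s : S s -> s <= c a by move=> Ss; exact/compl_le_swap/(le_trans acm)/compl_anti/Sm.
have ax : a <= x by rewrite -(complK x); exact/(le_trans acm)/compl_anti.
have notSa : ~ S a by move=> Sa; apply: (proj1 atom_a); exact/le_compl_self/Sca.
apply: (maxS (addpt S a)).
  by split=> [z Sz|sub]; [left | exact/notSa/(sub a (or_intror erefl))].
split; last exact: orthogonal_addpt.
by move=> s [Ss|->]; [exact: atomS | split].
Qed.

Lemma maximal_orth_atoms_is_join {x S} :
  pseudo_orthomodular c -> @atomic d T -> maximal_orth_atoms_below x S ->
  is_join S x.
Proof.
move=> hpom hat maxS; have [[atomS _] _] := maxS.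
split=> [s /atomS [] //|u Su].
suff /(hpom u x x) x_le : LB (addpt (UB (addpt (LB (pair2 u x)) (c x))) x) x.
  exact: x_le u (or_introl erefl).
move=> m [m_ub|->]; last exact: lexx.
have Sm : UB S m.
  move=> s Ss; apply: m_ub; left => z [->|->]; [exact: Su | exact: (proj2 (atomS s Ss))].
by rewrite (maximal_orth_atoms_ub_compl_top hat maxS Sm (m_ub _ (or_intror erefl))) lex1.
Qed.

End Complementation.

Theorem proposition5 (d : Order.disp_t) (T : tbPOrderType d) (c : T -> T)
  (hc : complementation c) (hpom : pseudo_orthomodular c)
  (hat : @atomic d T) :
  (forall x : T, exists S : T -> Prop,
      (forall s, S s -> atom s /\ s <= x) /\ orthogonal c S /\ is_join S x)
  /\ @atomistic d T.
Proof.
have orth_join x : exists S : T -> Prop,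
    (forall s, S s -> atom s /\ s <= x) /\ orthogonal c S /\ is_join S x.
  have [S maxS] := exists_maximal_orth_atoms_below c x.
  have [[atomS orthS] _] := maxS.
  by exists S; split; [|split; last exact: (maximal_orth_atoms_is_join c hc hpom hat maxS)].
split=> // x; have [S [atomS [_ joinS]]] := orth_join x.
by exists S; split=> // s /atomS [].
Qed.
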